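(* Let $n,m\ge1$, $C:\{0,1\}^n\to\{0,1\}^m$, $\varepsilon\in(0,1)$, $\tilde\varepsilon=(4/100)^2\varepsilon^2$, $t=\lfloor n/\tilde\varepsilon\rfloor$, and $\alpha>1$ such that $j^*$ (defined below) exists. Suppose $$\Pr_{y\leftarrow\mathcal{D}^C}\big[\mathcal{D}^C(y)\in(1\pm 100\sqrt{\tilde\varepsilon})\,\alpha2^{-m}\big]\le\tilde\varepsilon^{1/4}.$$ Let $c=\lceil 25/\sqrt{\tilde\varepsilon}\rceil$. Then (i) $2^{-(j^*-c)\tilde\varepsilon}\le 2^{28\sqrt{\tilde\varepsilon}}\alpha2^{-m}$ and $2^{-(j^*+c)\tilde\varepsilon}\ge 2^{-28\sqrt{\tilde\varepsilon}}\alpha2^{-m}$; (ii) $\sum_{j=j^*-c}^{j^*+c} h^C_j\le\tilde\varepsilon^{1/4}$; (iii) $\sum_{j\le j^*} h^C_j\in[g_H\pm\tilde\varepsilon^{1/4}]$; (iv) $\frac{1}{2^m}\sum_{j\le j^*}h^C_j\,2^{j\tilde\varepsilon}\in[g_{UH}\pm 4\tilde\varepsilon^{1/4}]$.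
   Context: For $C:\{0,1\}^n\to\{0,1\}^m$, $\mathcal{D}^C$ is the distribution on $\{0,1\}^m$ with $\mathcal{D}^C(y)=\Pr_{r\leftarrow\{0,1\}^n}[C(r)=y]$ ($r$ uniform). The $(\tilde\varepsilon,t)$-histogram of $\mathcal{D}^C$ is $h^C=(h^C_0,\dots,h^C_t)$ with $h^C_i=\sum_{y\in\mathcal{B}_i}\mathcal{D}^C(y)$, where $\mathcal{B}_i=\{y:\mathcal{D}^C(y)\in(2^{-(i+1)\tilde\varepsilon},2^{-i\tilde\varepsilon}]\}$; by convention $h^C_j=0$ for integers $j\notin\{0,\dots,t\}$. $j^*=\max\{j\in\mathbb{Z}_{\ge0}: 2^{-(j+1)\tilde\varepsilon}>\alpha2^{-m}\}$. $g_H=\Pr_{y\leftarrow\mathcal{D}^C}[\mathcal{D}^C(y)\ge\alpha2^{-m}]$ and $g_{UH}=\Pr_{y\leftarrow\{0,1\}^m\text{ uniform}}[\mathcal{D}^C(y)\ge\alpha2^{-m}]$. Notation: $[a\pm b]=[a-b,a+b]$ and $(1\pm\delta)x=[(1-\delta)x,(1+\delta)x]$. *)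

From Stdlib Require Import Reals Lra List ZArith Bool.
Import ListNotations.
Open Scope R_scope.

Fixpoint all_bits (k : nat) : list (list bool) :=
  match k with
  | O => [nil]
  | S k' => map (cons false) (all_bits k') ++ map (cons true) (all_bits k')
  end.

Definition sumR {A : Type} (l : list A) (f : A -> R) : R :=
  fold_right (fun a s => f a + s) 0 l.

Definition bits_eqb (x y : list bool) : bool :=
  if list_eq_dec bool_dec x y then true else false.

(* D^C(y) = Pr_{r uniform in {0,1}^n}[C r = y] *)
Definition DC (n : nat) (C : list bool -> list bool) (y : list bool) : R :=
  INR (length (filter (fun r => bits_eqb (C r) y) (all_bits n))) / 2 ^ n.

Definition Rleb (a b : R) : bool := if Rle_dec a b then true else false.
Definition Rltb (a b : R) : bool := if Rlt_dec a b then true else false.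

Definition pow2 (x : R) : R := Rpower 2 x.

Definition in_bucket (et : R) (i : Z) (p : R) : bool :=
  Rltb (pow2 (- (IZR i + 1) * et)) p && Rleb p (pow2 (- IZR i * et)).

(* (et,t)-histogram h^C_j, with h^C_j = 0 for j outside {0..t} *)
Definition hist (n m : nat) (C : list bool -> list bool) (et : R) (t : nat)
  (j : Z) : R :=
  if (0 <=? j)%Z && (j <=? Z.of_nat t)%Z then
    sumR (all_bits m)
      (fun y => if in_bucket et j (DC n C y) then DC n C y else 0)
  else 0.

(* sum_{j = a}^{b} f j over integers (0 if b < a) *)
Definition sumZ (a b : Z) (f : Z -> R) : R :=
  sumR (map (fun k => (a + Z.of_nat k)%Z) (seq 0 (Z.to_nat (b - a + 1)))) f.

(* g_H = Pr_{y <- D^C}[D^C(y) >= alpha 2^{-m}] *)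
Definition gH (n m : nat) (C : list bool -> list bool) (alpha : R) : R :=
  sumR (all_bits m)
    (fun y => if Rleb (alpha / 2 ^ m) (DC n C y) then DC n C y else 0).

(* g_UH = Pr_{y uniform in {0,1}^m}[D^C(y) >= alpha 2^{-m}] *)
Definition gUH (n m : nat) (C : list bool -> list bool) (alpha : R) : R :=
  sumR (all_bits m)
    (fun y => if Rleb (alpha / 2 ^ m) (DC n C y) then / 2 ^ m else 0).

Definition jstar_pred (m : nat) (et alpha : R) (j : nat) : Prop :=
  pow2 (- (INR j + 1) * et) > alpha / 2 ^ m.

(* Write s = sqrt et (so s <= 1/25 and et = s^2) and A = alpha 2^-m.  The
   index jstar is the last histogram bucket lying entirely above A, so the
   bucket boundaries 2^-(jstar+1)et and 2^-(jstar+2)et sandwich A.  Since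
   c s < 26, shifting by c+2 buckets moves a boundary by a factor of at most
   2^(28 s) <= 1 + 100 s; this gives (i) and shows that every bucket of index
   jstar-c .. jstar+c lies inside the window (1 +- 100 s) A, whence (ii).

   For (iii) and (iv) every histogram sum is rewritten as a sum over outcomes
   y, each y contributing to the single bucket containing D^C(y).  An outcome
   in a bucket of index at most jstar is heavy (D^C(y) > A); an outcome that
   is heavy but in no such bucket must lie in the window (a heavier one falls
   into a bucket of index at most jstar, and at most t since D^C(y) >= 2^-n).
   Hence the low buckets reproduce g_H, resp. g_UH after reweighting bucket j
   by 2^(j et), up to the window mass (at most et^(1/4) by hypothesis) and,
   for g_UH, a factor 2^-et >= 1 - et per outcome. *)

From Stdlib Require Import Reals List ZArith Bool Lra Lia Psatz.
Import ListNotations.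
Open Scope R_scope.

Lemma pow2_pos x : 0 < pow2 x.
Proof. unfold pow2, Rpower; apply exp_pos. Qed.

Lemma pow2_plus x y : pow2 (x + y) = pow2 x * pow2 y.
Proof. unfold pow2; apply Rpower_plus. Qed.

Lemma pow2_le x y : x <= y -> pow2 x <= pow2 y.
Proof. intros H; unfold pow2; apply Rle_Rpower; lra. Qed.

Lemma pow2_le_inv x y : pow2 x <= pow2 y -> x <= y.
Proof.
  intros H; destruct (Rle_lt_dec x y) as [|Hyx]; auto.
  unfold pow2 in H; apply Rpower_lt with (x := 2) in Hyx; lra.
Qed.

Lemma pow2_0 : pow2 0 = 1.
Proof. unfold pow2; apply Rpower_O; lra. Qed.

Lemma pow2_opp x : pow2 (- x) = / pow2 x.
Proof. unfold pow2; apply Rpower_Ropp. Qed.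

Lemma pow2_INR k : pow2 (INR k) = 2 ^ k.
Proof. unfold pow2; apply Rpower_pow; lra. Qed.

(* A crude upper bound on ln 2, from exp(3/32) > 1 + 3/32. *)
Lemma ln2_lt : ln 2 < 3 / 4.
Proof.
  apply exp_lt_inv. rewrite exp_ln by lra.
  replace (3 / 4) with (8 * (3 / 32)) by field.
  assert (Hstep : 1 + 3 / 32 < exp (3 / 32)) by (apply exp_ineq1; lra).
  assert (Hpow : exp (8 * (3 / 32)) = exp (3 / 32) ^ 8).
  { rewrite <- exp_ln with (x := exp (3/32) ^ 8) by (apply pow_lt, exp_pos).
    rewrite ln_pow, ln_exp by apply exp_pos. f_equal; simpl; ring. }
  rewrite Hpow.
  assert ((1 + 3 / 32) ^ 8 <= exp (3 / 32) ^ 8) by (apply pow_incr; lra).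
  simpl in *; lra.
Qed.

Lemma exp_le_mono x y : x <= y -> exp x <= exp y.
Proof. intros [H | ->]; [left; apply exp_increasing; exact H | lra]. Qed.

(* exp x <= 1/(1-x), stated without division; follows from 1 - x <= exp(-x). *)
Lemma exp_le_inv_one_minus x : exp x * (1 - x) <= 1.
Proof.
  assert (H1 : 1 - x <= exp (- x)) by (pose proof (exp_ineq1_le (- x)); lra).
  assert (H2 : exp x * exp (- x) = 1) by (rewrite <- exp_plus, Rplus_opp_r; apply exp_0).
  pose proof (exp_pos x); nra.
Qed.

(* The key numerical estimate: 2^(28 s) <= 1 + 100 s for 0 <= s <= 1/25.
   Using ln 2 < 3/4 and exp y <= 1/(1-y) with y = 21 s/2, it reduces to the
   polynomial inequality (1 + 100 s)(1 - y)^2 >= 1. *)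
Lemma pow2_28_le s : 0 <= s <= 1 / 25 -> pow2 (28 * s) <= 1 + 100 * s.
Proof.
  intros Hs. set (y := 21 * s / 2).
  assert (Hln : pow2 (28 * s) <= exp y * exp y).
  { rewrite <- exp_plus. unfold pow2, Rpower. apply exp_le_mono.
    pose proof ln2_lt; unfold y; nra. }
  pose proof (exp_le_inv_one_minus y) as Hy.
  assert (Hpoly : 1 <= (1 + 100 * s) * ((1 - y) * (1 - y))) by (unfold y; nra).
  assert (Hey : 0 < exp y) by apply exp_pos.
  assert (Hprod : exp y * (1 - y) * (exp y * (1 - y)) <= 1).
  { assert (0 <= exp y * (1 - y)) by (unfold y in *; nra). nra. }
  assert (0 < (1 - y) * (1 - y)) by (unfold y; nra).
  nra.
Qed.

Lemma pow2_28_ge s : 0 <= s <= 1 / 25 -> 1 - 100 * s <= pow2 (- (28 * s)).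
Proof.
  intros Hs. rewrite pow2_opp.
  pose proof (pow2_28_le s Hs). pose proof (pow2_pos (28 * s)).
  apply Rmult_le_reg_r with (pow2 (28 * s)); auto.
  rewrite Rinv_l by lra. nra.
Qed.

(* 2^-e >= 1 - e; used since a bucket member scaled by 2^(j et) is >= 2^-et. *)
Lemma pow2_neg_ge e : 0 <= e -> 1 - e <= pow2 (- e).
Proof.
  intros He. unfold pow2, Rpower. pose proof ln2_lt; pose proof ln_lt_2.
  pose proof (exp_ineq1_le (- e * ln 2)). nra.
Qed.

Lemma le_Rpower_small x a : 0 < x <= 1 -> 0 <= a <= 1 -> x <= Rpower x a.
Proof.
  intros Hx Ha. unfold Rpower. rewrite <- (exp_ln x) at 1 by lra.
  apply exp_le_mono.
  assert (ln x <= 0).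
  { destruct (Req_dec x 1) as [-> | Hx1]; [rewrite ln_1; lra|].
    rewrite <- ln_1; left; apply ln_increasing; lra. }
  nra.
Qed.

Lemma sumR_ext {T} (l : list T) f g :
  (forall x, In x l -> f x = g x) -> sumR l f = sumR l g.
Proof. induction l as [|a l IH]; simpl; intros H; auto. rewrite H, IH; auto. Qed.

Lemma sumR_le {T} (l : list T) f g :
  (forall x, In x l -> f x <= g x) -> sumR l f <= sumR l g.
Proof.
  induction l as [|a l IH]; simpl; intros H; [lra|].
  pose proof (H a (or_introl eq_refl)); pose proof (IH (fun x h => H x (or_intror h))); lra.
Qed.

Lemma sumR_zero {T} (l : list T) : sumR l (fun _ => 0) = 0.
Proof. induction l as [|a l IH]; simpl; [|rewrite IH]; ring. Qed.

Lemma sumR_plus {T} (l : list T) f g :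
  sumR l (fun x => f x + g x) = sumR l f + sumR l g.
Proof. induction l as [|a l IH]; simpl; [|rewrite IH]; ring. Qed.

Lemma sumR_minus {T} (l : list T) f g :
  sumR l (fun x => f x - g x) = sumR l f - sumR l g.
Proof. induction l as [|a l IH]; simpl; [|rewrite IH]; ring. Qed.

Lemma sumR_scal {T} (l : list T) k f : sumR l (fun x => k * f x) = k * sumR l f.
Proof. induction l as [|a l IH]; simpl; [|rewrite IH]; ring. Qed.

Lemma sumR_const {T} (l : list T) k : sumR l (fun _ => k) = INR (length l) * k.
Proof.
  induction l as [|a l IH]; simpl length; [simpl; ring|].
  rewrite S_INR; simpl; rewrite IH; ring.
Qed.

Lemma sumR_swap {T U} (l1 : list T) (l2 : list U) F :
  sumR l1 (fun a => sumR l2 (fun b => F a b)) = sumR l2 (fun b => sumR l1 (fun a => F a b)).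
Proof.
  induction l1 as [|a l IH]; simpl; [now rewrite sumR_zero|].
  rewrite IH, <- sumR_plus. reflexivity.
Qed.

Lemma sumR_at_most_one {T} (l : list T) (P : T -> bool) (g : T -> R) :
  NoDup l -> (forall a b, P a = true -> P b = true -> a = b) ->
  (exists x, In x l /\ P x = true /\ sumR l (fun j => if P j then g j else 0) = g x)
  \/ ((forall x, In x l -> P x = false) /\ sumR l (fun j => if P j then g j else 0) = 0).
Proof.
  intros Hnd Huniq. induction Hnd as [|a l Ha Hnd IH]; simpl.
  - right; split; [tauto | reflexivity].
  - destruct IH as [[x [Hx [Px Hsum]]] | [Hnone Hsum]]; rewrite Hsum.
    + assert (P a = false) as ->.
      { destruct (P a) eqn:Pa; auto. rewrite (Huniq a x Pa Px) in Ha; contradiction. }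
      left; exists x; repeat split; auto; ring.
    + destruct (P a) eqn:Pa.
      * left; exists a; repeat split; auto; ring.
      * right; split; [intros x [<- | Hx]; auto | ring].
Qed.

Definition zrange (a b : Z) : list Z :=
  map (fun k => (a + Z.of_nat k)%Z) (seq 0 (Z.to_nat (b - a + 1))).

Lemma sumZ_zrange a b f : sumZ a b f = sumR (zrange a b) f.
Proof. reflexivity. Qed.

Lemma in_zrange a b x : In x (zrange a b) <-> (a <= x <= b)%Z.
Proof.
  unfold zrange. rewrite in_map_iff. split.
  - intros [k [<- Hk]]. apply in_seq in Hk. lia.
  - intros H. exists (Z.to_nat (x - a)). split; [lia | apply in_seq; lia].
Qed.

Lemma zrange_NoDup a b : NoDup (zrange a b).
Proof.
  apply NoDup_map_NoDup_ForallPairs; [intros x y _ _ H; lia | apply seq_NoDup].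
Qed.

Lemma length_all_bits k : length (all_bits k) = (2 ^ k)%nat.
Proof. induction k; simpl; auto. rewrite length_app, !length_map, IHk. lia. Qed.

Lemma Rleb_true_iff a b : Rleb a b = true <-> a <= b.
Proof. unfold Rleb; destruct (Rle_dec a b); split; auto; discriminate. Qed.

Lemma Rltb_true_iff a b : Rltb a b = true <-> a < b.
Proof. unfold Rltb; destruct (Rlt_dec a b); split; auto; discriminate. Qed.

Lemma Rleb_true a b : a <= b -> Rleb a b = true.
Proof. apply Rleb_true_iff. Qed.

Lemma Rleb_false a b : b < a -> Rleb a b = false.
Proof. unfold Rleb; destruct (Rle_dec a b); auto; lra. Qed.

Lemma in_bucket_iff et j p : in_bucket et j p = true <->
  pow2 (- (IZR j + 1) * et) < p /\ p <= pow2 (- IZR j * et).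
Proof. unfold in_bucket. rewrite andb_true_iff, Rltb_true_iff, Rleb_true_iff. tauto. Qed.

Lemma bucket_unique et a b p : 0 < et ->
  in_bucket et a p = true -> in_bucket et b p = true -> a = b.
Proof.
  intros He Ha Hb. apply in_bucket_iff in Ha, Hb.
  assert (Hsep : forall i k, (i < k)%Z -> pow2 (- IZR k * et) <= pow2 (- (IZR i + 1) * et)).
  { intros i k Hik. apply pow2_le.
    assert (IZR i + 1 <= IZR k) by (rewrite <- plus_IZR; apply IZR_le; lia). nra. }
  destruct (Z.lt_trichotomy a b) as [H|[H|H]]; auto; exfalso;
    apply Hsep in H; lra.
Qed.

Lemma bucket_exists et p (K : nat) : 0 < et -> 0 < p <= 1 ->
  pow2 (- (INR K + 1) * et) < p ->
  exists j : nat, (j <= K)%nat /\ in_bucket et (Z.of_nat j) p = true.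
Proof.
  intros He Hp. induction K as [|K IH]; intros H.
  - exists 0%nat. split; [lia|]. apply in_bucket_iff. simpl in *.
    rewrite Ropp_0, Rmult_0_l, pow2_0. lra.
  - destruct (Rlt_le_dec (pow2 (- (INR K + 1) * et)) p) as [Hlt|Hge].
    + destruct (IH Hlt) as [j [Hj Hb]]. exists j; split; auto.
    + exists (S K). split; auto. apply in_bucket_iff.
      rewrite <- INR_IZR_INZ, S_INR in *. split; auto.
Qed.

(* A value p >= 2^-n can only lie in buckets of index at most t, as t et is
   within et of n. *)
Lemma bucket_index_le et p (n t : nat) (j : Z) : 0 < et ->
  INR n / et < INR t + 1 -> / 2 ^ n <= p ->
  in_bucket et j p = true -> (j <= Z.of_nat t)%Z.
Proof.
  intros He Ht Hp Hb. apply in_bucket_iff in Hb as [_ Hb].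
  rewrite <- pow2_INR, <- pow2_opp in Hp.
  assert (Hj : IZR j * et <= INR n).
  { assert (H : pow2 (- INR n) <= pow2 (- IZR j * et)) by lra.
    apply pow2_le_inv in H; lra. }
  assert (IZR j < IZR (Z.of_nat t + 1)).
  { rewrite plus_IZR, <- INR_IZR_INZ.
    apply Rmult_lt_reg_r with et; auto.
    apply Rle_lt_trans with (INR n); auto.
    apply (Rmult_lt_compat_r et) in Ht; auto. unfold Rdiv in Ht.
    rewrite Rmult_assoc, Rinv_l in Ht; lra. }
  apply lt_IZR in H. lia.
Qed.

Lemma DC_bounds n C y : 0 <= DC n C y <= 1 /\ (0 < DC n C y -> / 2 ^ n <= DC n C y).
Proof.
  unfold DC. set (L := length _).
  assert (HL : INR L <= 2 ^ n).
  { replace (2 ^ n) with (INR (2 ^ n)) by (rewrite pow_INR; reflexivity).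
    apply le_INR. unfold L. rewrite <- length_all_bits. apply filter_length_le. }
  assert (H2 : 0 < 2 ^ n) by (apply pow_lt; lra).
  pose proof (pos_INR L). unfold Rdiv.
  assert (Hinv : 0 < / 2 ^ n) by (apply Rinv_0_lt_compat; auto).
  repeat split.
  - nra.
  - apply Rmult_le_reg_r with (2 ^ n); auto. rewrite Rmult_assoc, Rinv_l; lra.
  - intros Hp. destruct L as [|L'].
    + simpl in Hp. lra.
    + rewrite S_INR. pose proof (pos_INR L'). nra.
Qed.

Definition in_hist (et : R) (t : nat) (j : Z) (p : R) : bool :=
  ((0 <=? j)%Z && (j <=? Z.of_nat t)%Z) && in_bucket et j p.

Lemma hist_by_outcome n m C et t a b (w : Z -> R) :
  sumZ a b (fun j => hist n m C et t j * w j) =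
  sumR (all_bits m) (fun y => sumR (zrange a b) (fun j =>
    if in_hist et t j (DC n C y) then DC n C y * w j else 0)).
Proof.
  rewrite sumZ_zrange, <- sumR_swap. apply sumR_ext. intros j _.
  unfold hist, in_hist. destruct ((0 <=? j)%Z && (j <=? Z.of_nat t)%Z); simpl.
  - rewrite Rmult_comm, <- sumR_scal. apply sumR_ext. intros y _.
    destruct (in_bucket _ _ _); ring.
  - rewrite sumR_zero; ring.
Qed.

Lemma hist_by_outcome_unweighted n m C et t a b :
  sumZ a b (hist n m C et t) =
  sumR (all_bits m) (fun y => sumR (zrange a b) (fun j =>
    if in_hist et t j (DC n C y) then DC n C y * 1 else 0)).
Proof.
  rewrite <- (hist_by_outcome n m C et t a b (fun _ => 1)), !sumZ_zrange.
  apply sumR_ext; intros; ring.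
Qed.

Lemma in_hist_unique et t p a b : 0 < et ->
  in_hist et t a p = true -> in_hist et t b p = true -> a = b.
Proof.
  unfold in_hist; intros He Ha Hb. apply andb_prop in Ha, Hb.
  eapply bucket_unique; [exact He | apply Ha | apply Hb].
Qed.

Definition near_threshold (s A p : R) : bool :=
  Rleb ((1 - 100 * s) * A) p && Rleb p ((1 + 100 * s) * A).

Definition near_mass (n m : nat) (C : list bool -> list bool) (s A : R) : R :=
  sumR (all_bits m) (fun y => if near_threshold s A (DC n C y) then DC n C y else 0).

Lemma near_mass_nonneg n m C s A : 0 <= near_mass n m C s A.
Proof.
  unfold near_mass. apply Rle_trans with (sumR (all_bits m) (fun _ => 0)).
  - rewrite sumR_zero; lra.
  - apply sumR_le. intros y _. destruct (DC_bounds n C y) as [[D0 _] _].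
    destruct (near_threshold s A (DC n C y)); lra.
Qed.

Section Threshold.

Variables (m : nat) (et alpha : R) (jstar : nat).
Hypothesis Het : 0 < et.
Hypothesis Hs_small : sqrt et <= 1 / 25.
Hypothesis Halpha : 1 < alpha.
Hypothesis Hjstar : jstar_pred m et alpha jstar /\
  forall j : nat, jstar_pred m et alpha j -> (j <= jstar)%nat.

Local Notation s := (sqrt et).
Local Notation A := (alpha / 2 ^ m).

Lemma sqrt_et_facts : 0 < s /\ et = s * s.
Proof. split; [apply sqrt_lt_R0 | rewrite sqrt_sqrt]; lra. Qed.

Lemma threshold_pos : 0 < / 2 ^ m < A.
Proof.
  assert (0 < / 2 ^ m) by (apply Rinv_0_lt_compat, pow_lt; lra).
  unfold Rdiv; split; nra.
Qed.

Lemma jstar_bounds :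
  A < pow2 (- (INR jstar + 1) * et) /\ pow2 (- (INR jstar + 2) * et) <= A.
Proof.
  destruct Hjstar as [Hlo Hmax]. split; [exact Hlo|].
  destruct (Rle_lt_dec (pow2 (- (INR jstar + 2) * et)) A) as [|Hgt]; auto.
  assert (S jstar <= jstar)%nat; [|lia].
  apply Hmax. unfold jstar_pred. rewrite S_INR.
  replace (INR jstar + 1 + 1) with (INR jstar + 2) by ring. exact Hgt.
Qed.

(* Part (i), with the lower edge taken one bucket further out: shifting a
   bucket edge by c+2 buckets changes it by at most 2^(28 s), as c s < 26
   and s <= 1/25. *)
Lemma window_edges (c : nat) : INR c - 1 < 25 / s ->
  pow2 (- (INR jstar - INR c) * et) <= pow2 (28 * s) * A /\
  pow2 (- (28 * s)) * A <= pow2 (- (INR jstar + INR c + 1) * et).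
Proof.
  intros Hc. destruct sqrt_et_facts as [Hs Hets]. destruct jstar_bounds as [Hlo Hhi].
  assert (HA : 0 < A) by (pose proof threshold_pos; lra).
  set (r := sqrt et) in *.
  assert (Hcs : INR c * r < 26).
  { apply (Rmult_lt_compat_r r) in Hc; auto. unfold Rdiv in Hc.
    rewrite Rmult_assoc, Rinv_l in Hc; lra. }
  assert (Hcet : INR c * et <= 26 * r) by (rewrite Hets; nra).
  split.
  - replace (- (INR jstar - INR c) * et) with (- (INR jstar + 2) * et + (INR c + 2) * et)
      by ring.
    rewrite pow2_plus, Rmult_comm.
    apply Rmult_le_compat; try (left; apply pow2_pos); auto.
    apply pow2_le. rewrite Hets in *; nra.
  - replace (- (INR jstar + INR c + 1) * et) with (- (INR jstar + 1) * et + - (INR c * et))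
      by ring.
    rewrite pow2_plus, Rmult_comm.
    apply Rmult_le_compat; try (left; apply pow2_pos); try lra.
    apply pow2_le; lra.
Qed.

Lemma near_window (c : nat) (j : Z) (p : R) : INR c - 1 < 25 / s ->
  (Z.of_nat jstar - Z.of_nat c <= j <= Z.of_nat jstar + Z.of_nat c)%Z ->
  in_bucket et j p = true -> near_threshold s A p = true.
Proof.
  intros Hc Hj Hb. apply in_bucket_iff in Hb as [Hb1 Hb2].
  destruct sqrt_et_facts as [Hs _]. destruct (window_edges c Hc) as [Hup Hdown].
  pose proof (pow2_28_le s ltac:(lra)). pose proof (pow2_28_ge s ltac:(lra)).
  assert (HA : 0 < A) by (pose proof threshold_pos; lra).
  assert (Hjlo : INR jstar - INR c <= IZR j)
    by (rewrite !INR_IZR_INZ, <- minus_IZR; apply IZR_le; lia).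
  assert (Hjhi : IZR j <= INR jstar + INR c)
    by (rewrite !INR_IZR_INZ, <- plus_IZR; apply IZR_le; lia).
  unfold near_threshold. rewrite andb_true_iff, !Rleb_true_iff. split.
  - assert (pow2 (- (INR jstar + INR c + 1) * et) <= pow2 (- (IZR j + 1) * et))
      by (apply pow2_le; nra).
    assert ((1 - 100 * s) * A <= pow2 (- (28 * s)) * A) by (apply Rmult_le_compat_r; lra).
    lra.
  - assert (pow2 (- IZR j * et) <= pow2 (- (INR jstar - INR c) * et)) by (apply pow2_le; nra).
    assert (pow2 (28 * s) * A <= (1 + 100 * s) * A) by (apply Rmult_le_compat_r; lra).
    lra.
Qed.

Lemma low_bucket_heavy (j : Z) (p : R) :
  (j <= Z.of_nat jstar)%Z -> in_bucket et j p = true -> A < p.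
Proof.
  intros Hj Hb. apply in_bucket_iff in Hb as [Hb _].
  destruct jstar_bounds as [Hlo _].
  assert (IZR j <= INR jstar) by (rewrite INR_IZR_INZ; apply IZR_le; exact Hj).
  assert (pow2 (- (INR jstar + 1) * et) <= pow2 (- (IZR j + 1) * et)) by (apply pow2_le; nra).
  lra.
Qed.

Section Outcomes.

Variables (n : nat) (C : list bool -> list bool) (t : nat).
Hypothesis Ht : INR n / et < INR t + 1.

(* Conversely, an outcome clearly above the window falls into a histogram bucket
   of index at most jstar; the index is at most t because D^C(y) >= 2^-n. *)
Lemma heavy_in_low_bucket (y : list bool) : (1 + 100 * s) * A < DC n C y ->
  exists j : Z, (0 <= j <= Z.of_nat jstar)%Z /\ in_hist et t j (DC n C y) = true.
Proof.
  intros Hy. destruct (DC_bounds n C y) as [[D0 D1] Dn].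
  destruct sqrt_et_facts as [Hs Hets]. destruct jstar_bounds as [_ Hhi].
  assert (HA : 0 < A) by (pose proof threshold_pos; lra).
  assert (Hedge : pow2 (- (INR jstar + 1) * et) < DC n C y).
  { replace (- (INR jstar + 1) * et) with (- (INR jstar + 2) * et + et) by ring.
    rewrite pow2_plus.
    assert (Het28 : pow2 et <= 1 + 100 * s).
    { apply Rle_trans with (pow2 (28 * s)); [apply pow2_le | apply pow2_28_le]; nra. }
    assert (pow2 (- (INR jstar + 2) * et) * pow2 et <= A * (1 + 100 * s))
      by (apply Rmult_le_compat; try (left; apply pow2_pos); lra).
    lra. }
  destruct (bucket_exists et (DC n C y) jstar Het ltac:(split; [nra | lra]) Hedge) as [j [Hj Hb]].
  exists (Z.of_nat j). split; [lia|].
  unfold in_hist. rewrite Hb, andb_true_r, andb_true_iff, !Z.leb_le. split; [lia|].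
  apply (bucket_index_le et (DC n C y) n t); auto. apply Dn; nra.
Qed.

Lemma low_buckets_cases (w : Z -> R) (y : list bool) :
  let p := DC n C y in
  let S := sumR (zrange 0 (Z.of_nat jstar))
             (fun j => if in_hist et t j p then p * w j else 0) in
  (exists j, (0 <= j <= Z.of_nat jstar)%Z /\ in_bucket et j p = true /\ A < p /\ S = p * w j)
  \/ (S = 0 /\ (p < A \/ near_threshold s A p = true)).
Proof.
  intros p S.
  destruct (sumR_at_most_one (zrange 0 (Z.of_nat jstar)) (fun j => in_hist et t j p)
              (fun j => p * w j) (zrange_NoDup _ _) (fun a b => in_hist_unique et t p a b Het))
    as [[j [Hj [Pj Hsum]]] | [Hnone Hsum]].
  - left. apply in_zrange in Hj. unfold in_hist in Pj. apply andb_prop in Pj as [_ Pj].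
    exists j. repeat split; try lia; auto. apply (low_bucket_heavy j); auto; lia.
  - right. split; [exact Hsum|].
    destruct (Rlt_le_dec p A) as [|HAp]; [left; auto | right].
    destruct (Rle_lt_dec p ((1 + 100 * s) * A)) as [Hup|Hup].
    + unfold near_threshold. rewrite andb_true_iff, !Rleb_true_iff.
      destruct sqrt_et_facts as [Hs _]. pose proof threshold_pos. split; [nra | exact Hup].
    + destruct (heavy_in_low_bucket y Hup) as [j [Hj Pj]].
      specialize (Hnone j (proj2 (in_zrange _ _ _) Hj)). cbv beta in Hnone.
      unfold p in Hnone. congruence.
Qed.

Lemma window_hist_le_near_mass (c : nat) : INR c - 1 < 25 / s ->
  sumZ (Z.of_nat jstar - Z.of_nat c) (Z.of_nat jstar + Z.of_nat c) (hist n m C et t)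
  <= near_mass n m C s A.
Proof.
  intros Hc. rewrite hist_by_outcome_unweighted. unfold near_mass.
  apply sumR_le. intros y _. destruct (DC_bounds n C y) as [[D0 _] _].
  destruct (sumR_at_most_one
              (zrange (Z.of_nat jstar - Z.of_nat c) (Z.of_nat jstar + Z.of_nat c))
              (fun j => in_hist et t j (DC n C y)) (fun j => DC n C y * 1)
              (zrange_NoDup _ _) (fun a b => in_hist_unique et t _ a b Het))
    as [[j [Hj [Pj ->]]] | [_ ->]].
  - apply in_zrange in Hj. unfold in_hist in Pj. apply andb_prop in Pj as [_ Pj].
    rewrite (near_window c j (DC n C y) Hc Hj Pj). lra.
  - destruct (near_threshold s A (DC n C y)); lra.
Qed.

Lemma low_hist_approx_gH :
  gH n m C alpha - near_mass n m C s A
  <= sumZ 0 (Z.of_nat jstar) (hist n m C et t) <= gH n m C alpha.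
Proof.
  rewrite hist_by_outcome_unweighted. unfold gH, near_mass. rewrite <- sumR_minus.
  split; apply sumR_le; intros y _; destruct (DC_bounds n C y) as [[D0 _] _];
    pose proof (low_buckets_cases (fun _ => 1) y) as Hcases; cbv beta zeta in Hcases;
    destruct Hcases as [[j [_ [_ [HAp ->]]]] | [-> [Hlight | Hnear]]].
  all: try (rewrite Rleb_true by lra); try (rewrite Rleb_false by lra);
       try rewrite Hnear; destruct (near_threshold s A (DC n C y));
       try destruct (Rleb A (DC n C y)); lra.
Qed.

(* Part (iv), per outcome: scaled by 2^(j et), a member of bucket j counts for a
   number in (2^-et, 1]; light outcomes count 0 and heavy ones missing from the
   low buckets are charged to the window. *)
Lemma low_weighted_outcome_bounds (y : list bool) :
  let S := sumR (zrange 0 (Z.of_nat jstar)) (fun j =>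
             if in_hist et t j (DC n C y) then DC n C y * pow2 (IZR j * et) else 0) in
  (if Rleb A (DC n C y) then / 2 ^ m else 0)
    - (if near_threshold s A (DC n C y) then DC n C y else 0) - et * / 2 ^ m
  <= / 2 ^ m * S <= (if Rleb A (DC n C y) then / 2 ^ m else 0).
Proof.
  intros S. destruct threshold_pos as [Hu HuA]. set (u := / 2 ^ m) in *.
  destruct (DC_bounds n C y) as [[D0 _] _].
  assert (Hdecay : 1 - et <= pow2 (- et)) by (apply pow2_neg_ge; lra).
  pose proof (low_buckets_cases (fun j => pow2 (IZR j * et)) y) as Hcases.
  cbv beta zeta in Hcases. fold S in Hcases.
  destruct Hcases as [[j [_ [Pj [HAp ->]]]] | [-> [Hlight | Hnear]]].
  - rewrite Rleb_true by lra. apply in_bucket_iff in Pj as [Pj_lo Pj_hi].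
    assert (Hscaled_lo : pow2 (- et) <= DC n C y * pow2 (IZR j * et)).
    { replace (pow2 (- et)) with (pow2 (- (IZR j + 1) * et) * pow2 (IZR j * et))
        by (rewrite <- pow2_plus; f_equal; ring).
      apply Rmult_le_compat_r; [left; apply pow2_pos | lra]. }
    assert (Hscaled_hi : DC n C y * pow2 (IZR j * et) <= 1).
    { replace 1 with (pow2 (- IZR j * et) * pow2 (IZR j * et))
        by (rewrite <- pow2_plus, <- pow2_0; f_equal; ring).
      apply Rmult_le_compat_r; [left; apply pow2_pos | lra]. }
    destruct (near_threshold s A (DC n C y)); split; nra.
  - rewrite Rleb_false by lra. destruct (near_threshold s A (DC n C y)); split; nra.
  - rewrite Hnear. destruct (Rleb A (DC n C y)) eqn:Hheavy;
      [apply Rleb_true_iff in Hheavy|]; split; nra.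
Qed.

(* Part (iv), exact form: the reweighted low buckets approximate g_UH, up to the
   window mass and a total loss of et from the factors 2^-et. *)
Lemma low_weighted_hist_approx_gUH :
  gUH n m C alpha - near_mass n m C s A - et
  <= / 2 ^ m * sumZ 0 (Z.of_nat jstar) (fun j => hist n m C et t j * pow2 (IZR j * et))
  <= gUH n m C alpha.
Proof.
  rewrite hist_by_outcome, <- sumR_scal. unfold gUH, near_mass.
  assert (Hsum_et : sumR (all_bits m) (fun _ => et * / 2 ^ m) = et).
  { rewrite sumR_const, length_all_bits, pow_INR.
    replace (INR 2) with 2 by reflexivity. field. apply pow_nonzero; lra. }
  split.
  - eapply Rle_trans; [| apply sumR_le; intros y _; apply low_weighted_outcome_bounds].
    rewrite !sumR_minus, Hsum_et. lra.
  - apply sumR_le; intros y _. apply low_weighted_outcome_bounds.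
Qed.

End Outcomes.

End Threshold.

Theorem mainTheorem2
  (n m : nat) (C : list bool -> list bool)
  (Hn : (1 <= n)%nat) (Hm : (1 <= m)%nat)
  (HC : forall r, In r (all_bits n) -> length (C r) = m)
  (eps et : R) (Heps : 0 < eps < 1)
  (Het : et = (4 / 100) ^ 2 * eps ^ 2)
  (t : nat) (Ht : INR t <= INR n / et < INR t + 1)
  (alpha : R) (Halpha : 1 < alpha)
  (jstar : nat)
  (Hjstar : jstar_pred m et alpha jstar /\
            forall j : nat, jstar_pred m et alpha j -> (j <= jstar)%nat)
  (Hmass : sumR (all_bits m)
             (fun y =>
                if Rleb ((1 - 100 * sqrt et) * (alpha / 2 ^ m)) (DC n C y)
                   && Rleb (DC n C y) ((1 + 100 * sqrt et) * (alpha / 2 ^ m))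
                then DC n C y else 0)
           <= Rpower et (1 / 4))
  (c : nat) (Hc : INR c - 1 < 25 / sqrt et <= INR c) :
  (pow2 (- (INR jstar - INR c) * et) <= pow2 (28 * sqrt et) * (alpha / 2 ^ m)
   /\ pow2 (- (INR jstar + INR c) * et) >= pow2 (- 28 * sqrt et) * (alpha / 2 ^ m))
  /\ sumZ (Z.of_nat jstar - Z.of_nat c) (Z.of_nat jstar + Z.of_nat c)
       (hist n m C et t) <= Rpower et (1 / 4)
  /\ (gH n m C alpha - Rpower et (1 / 4)
        <= sumZ 0 (Z.of_nat jstar) (hist n m C et t)
        <= gH n m C alpha + Rpower et (1 / 4))
  /\ (gUH n m C alpha - 4 * Rpower et (1 / 4)
        <= / 2 ^ m * sumZ 0 (Z.of_nat jstar)
                       (fun j => hist n m C et t j * pow2 (IZR j * et))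
        <= gUH n m C alpha + 4 * Rpower et (1 / 4)).
Proof.
  assert (Hs : sqrt et = 4 / 100 * eps).
  { rewrite Het, <- Rpow_mult_distr. apply sqrt_pow2. lra. }
  assert (Het_pos : 0 < et) by (rewrite Het; apply Rmult_lt_0_compat; apply pow_lt; lra).
  assert (Hs_small : sqrt et <= 1 / 25) by lra.
  assert (HE : et <= Rpower et (1 / 4)).
  { apply le_Rpower_small; [|lra]. split; [lra|]. rewrite Het; simpl; nra. }
  change (near_mass n m C (sqrt et) (alpha / 2 ^ m) <= Rpower et (1 / 4)) in Hmass.
  destruct (window_edges m et alpha jstar Het_pos Hs_small Halpha Hjstar c (proj1 Hc))
    as [Hupper Hlower].
  pose proof (window_hist_le_near_mass m et alpha jstar Het_pos Hs_small Halpha Hjstar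
                n C t c (proj1 Hc)) as Hwindow.
  pose proof (low_hist_approx_gH m et alpha jstar Het_pos Hs_small Halpha Hjstar
                n C t (proj2 Ht)) as HgH.
  pose proof (low_weighted_hist_approx_gUH m et alpha jstar Het_pos Hs_small Halpha Hjstar
                n C t (proj2 Ht)) as HgUH.
  pose proof (near_mass_nonneg n m C (sqrt et) (alpha / 2 ^ m)).
  repeat split; try lra.
  (* (i), lower edge: the edge of bucket jstar+c is above that of jstar+c+1. *)
  apply Rle_ge. replace (- 28 * sqrt et) with (- (28 * sqrt et)) by ring.
  eapply Rle_trans; [exact Hlower | apply pow2_le].
  pose proof (pos_INR c). lra.
Qed.
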